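(* For every $n\ge 2$, under the Yule model, $$E_Y(D_n)=2n(n+1)\sum_{i=2}^n\frac1i-2n(n-1).$$
   Context: $\mathcal{BT}_n$ is the set of binary phylogenetic trees with leaves bijectively labeled by $\{1,\dots,n\}$ (rooted, every internal node with exactly two children). For leaves $i,j$ of $T$, the nodal distance $d_T(i,j)$ is the number of edges of the undirected path between them, and the total area is $D(T)=\sum_{1\le i<j\le n}d_T(i,j)$. $D_n$ is $D(T)$ for random $T\in\mathcal{BT}_n$. Under the Yule model $T$ has probability $P_Y(T)=\frac{2^{n-1}}{n!}\prod_{v\in V_{int}(T)}\frac{1}{\kappa_T(v)-1}$, with $V_{int}(T)$ the internal nodes and $\kappa_T(v)$ the number of leaves below $v$; $E_Y$ denotes expectation under it. *)

From HB Require Import structures.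
From mathcomp Require Import all_boot all_order all_algebra.
Set Implicit Arguments. Unset Strict Implicit. Unset Printing Implicit Defensive.
Import Order.TTheory GRing.Theory Num.Theory.

(* Children of a node are unordered in a phylogenetic tree; we represent each
   unordered tree by its unique canonical ordered representative (see
   [canonical] below). *)
Inductive tree := Leaf of nat | Node of tree & tree.

Fixpoint tree_enc (t : tree) : GenTree.tree nat :=
  match t with
  | Leaf a => GenTree.Leaf a
  | Node l r => GenTree.Node 0 [:: tree_enc l; tree_enc r]
  end.

Fixpoint tree_dec (g : GenTree.tree nat) : option tree :=
  match g with
  | GenTree.Leaf a => Some (Leaf a)
  | GenTree.Node _ [:: gl; gr] =>
      match tree_dec gl, tree_dec gr with
      | Some l, Some r => Some (Node l r)
      | _, _ => None
      end
  | _ => None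
  end.

Lemma tree_encK : pcancel tree_enc tree_dec.
Proof. by elim=> [a|l IHl r IHr] //=; rewrite IHl IHr. Qed.

HB.instance Definition _ := Equality.copy tree (pcan_type tree_encK).

Fixpoint leaves (t : tree) : seq nat :=
  match t with Leaf a => [:: a] | Node l r => leaves l ++ leaves r end.

Definition kappa (t : tree) : nat := size (leaves t).

Fixpoint minleaf (t : tree) : nat :=
  match t with Leaf a => a | Node l r => minn (minleaf l) (minleaf r) end.

Fixpoint canonical (t : tree) : bool :=
  match t with
  | Leaf _ => true
  | Node l r => [&& canonical l, canonical r & minleaf l < minleaf r]
  end.

Definition in_BT (n : nat) (t : tree) : bool :=
  canonical t && perm_eq (leaves t) (iota 1 n).

(* all trees with exactly k leaves, leaf labels taken from labs
   (fuel >= k suffices, since subtrees have strictly fewer leaves) *)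
Fixpoint trees_k (labs : seq nat) (fuel k : nat) : seq tree :=
  match fuel with
  | 0 => [::]
  | f.+1 =>
      if k == 1 then map Leaf labs
      else flatten [seq allpairs Node (trees_k labs f a) (trees_k labs f (k - a))
                   | a <- iota 1 k.-1]
  end.

Definition BT (n : nat) : seq tree :=
  undup [seq t <- trees_k (iota 1 n) n n | in_BT n t].

Fixpoint depth (t : tree) (i : nat) : nat :=
  match t with
  | Leaf _ => 0
  | Node l r => if i \in leaves l then (depth l i).+1 else (depth r i).+1
  end.

Fixpoint nodal_dist (t : tree) (i j : nat) : nat :=
  match t with
  | Leaf _ => 0
  | Node l r =>
      if (i \in leaves l) && (j \in leaves l) then nodal_dist l i j
      else if (i \in leaves r) && (j \in leaves r) then nodal_dist r i j
      else depth t i + depth t j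
  end.

Definition total_area (n : nat) (t : tree) : nat :=
  \sum_(1 <= i < n.+1) \sum_(i.+1 <= j < n.+1) nodal_dist t i j.

Local Open Scope ring_scope.

Fixpoint yule_prod (t : tree) : rat :=
  match t with
  | Leaf _ => 1
  | Node l r => ((kappa t).-1%:R)^-1 * yule_prod l * yule_prod r
  end.

Definition P_Y (n : nat) (t : tree) : rat :=
  (2 ^ n.-1)%:R / (n`!)%:R * yule_prod t.

Definition E_Y_D (n : nat) : rat :=
  \sum_(t <- BT n) P_Y n t * (total_area n t)%:R.

From HB Require Import structures.
From mathcomp Require Import all_boot all_order all_algebra.
From mathcomp Require Import zify ring lra.
Import Order.TTheory GRing.Theory Num.Theory.
Set Implicit Arguments. Unset Strict Implicit. Unset Printing Implicit Defensive.

(* Write D(T) through the sum [pair_dist T] of nodal distances over ORDERED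
   pairs of leaves, so 2 D(T) = pair_dist T.  Both [pair_dist] and the Sackin
   index [sackin] (sum of leaf depths) satisfy simple recurrences along the
   root split, in which only the sizes and Sackin indices of the two subtrees
   enter. *)

Lemma kappa_Node l r : kappa (Node l r) = kappa l + kappa r.
Proof. by rewrite /kappa /= size_cat. Qed.

Lemma kappa_gt0 t : 0 < kappa t.
Proof. by elim: t => [a|l IHl r IHr] //; rewrite kappa_Node addn_gt0 IHl. Qed.

(* Sackin index: the sum of the depths of the leaves, computed along the
   root split (each leaf of a subtree gains one edge). *)
Fixpoint sackin (t : tree) : nat :=
  match t with
  | Leaf _ => 0
  | Node l r => sackin l + kappa l + sackin r + kappa r
  end.

(* Sum of nodal distances over ordered pairs of leaves, computed along the
   root split: a path between the two subtrees has length depth + 1 on each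
   side, and each unordered cross pair is counted twice. *)
Fixpoint pair_dist (t : tree) : nat :=
  match t with
  | Leaf _ => 0
  | Node l r => pair_dist l + pair_dist r +
      2 * (kappa r * sackin l + kappa l * sackin r + 2 * (kappa l * kappa r))
  end.

Lemma sum_nat_const_seq (T : Type) (s : seq T) (c : nat) :
  \sum_(i <- s) c = size s * c.
Proof. by rewrite big_const_seq count_predT iter_addn_0 mulnC. Qed.

Lemma nodal_dist_sym t i j : nodal_dist t i j = nodal_dist t j i.
Proof.
elim: t => [a|l IHl r IHr] //=.
by rewrite (andbC (j \in _)) (andbC (j \in leaves r)) IHl IHr addnC.
Qed.

Lemma nodal_dist_diag t i : i \in leaves t -> nodal_dist t i i = 0.
Proof.
elim: t => [a|l IHl r IHr] //=; rewrite mem_cat !andbb.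
case: (boolP (i \in leaves l)) => [il _ | _ /= ir]; first exact: IHl.
by rewrite ir IHr.
Qed.

Section Node.
Variables l r : tree.
Hypothesis disj : ~~ has (mem (leaves l)) (leaves r).

Lemma notin_left i : i \in leaves r -> (i \in leaves l) = false.
Proof. by move=> ir; apply/negbTE/negP => il; case/negP: disj; apply/hasP; exists i. Qed.

Lemma notin_right i : i \in leaves l -> (i \in leaves r) = false.
Proof. by move=> il; apply/negbTE/negP => /notin_left; rewrite il. Qed.

Lemma depth_Node_l i : i \in leaves l -> depth (Node l r) i = (depth l i).+1.
Proof. by move=> /= ->. Qed.

Lemma depth_Node_r i : i \in leaves r -> depth (Node l r) i = (depth r i).+1.
Proof. by move=> /= /notin_left ->. Qed.

Lemma nodal_dist_Node_ll i j : i \in leaves l -> j \in leaves l ->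
  nodal_dist (Node l r) i j = nodal_dist l i j.
Proof. by move=> /= -> ->. Qed.

Lemma nodal_dist_Node_rr i j : i \in leaves r -> j \in leaves r ->
  nodal_dist (Node l r) i j = nodal_dist r i j.
Proof. by move=> /= /[dup] /notin_left -> -> ->. Qed.

Lemma nodal_dist_Node_lr i j : i \in leaves l -> j \in leaves r ->
  nodal_dist (Node l r) i j = (depth l i).+1 + (depth r j).+1.
Proof.
by move=> il jr; rewrite /= il (notin_left jr) (notin_right il).
Qed.

End Node.

Lemma sum_nat_succ (T : Type) (s : seq T) (F : T -> nat) :
  \sum_(i <- s) (F i).+1 = \sum_(i <- s) F i + size s.
Proof.
under eq_bigr do rewrite -addn1.
by rewrite big_split /= sum_nat_const_seq muln1.
Qed.

Lemma sum_cross (L R : seq nat) (f g : nat -> nat) :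
  \sum_(i <- L) \sum_(j <- R) (f i + g j) =
  size R * \sum_(i <- L) f i + size L * \sum_(j <- R) g j.
Proof.
under eq_bigr => i _ do rewrite big_split /= sum_nat_const_seq.
by rewrite big_split /= sum_nat_const_seq -big_distrr.
Qed.

Lemma disjoint_leaves l r : uniq (leaves (Node l r)) ->
  [/\ uniq (leaves l), uniq (leaves r) & ~~ has (mem (leaves l)) (leaves r)].
Proof. by rewrite /= cat_uniq => /and3P []. Qed.

Lemma sackin_sum t : uniq (leaves t) -> sackin t = \sum_(i <- leaves t) depth t i.
Proof.
elim: t => [a|l IHl r IHr]; first by rewrite big_seq1.
case/disjoint_leaves=> ul ur disj.
rewrite -[leaves (Node l r)]/(leaves l ++ leaves r) big_cat.
under eq_big_seq => i il do rewrite depth_Node_l //.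
under [\sum_(i <- leaves r) _]eq_big_seq => i ir do rewrite depth_Node_r //.
by rewrite !sum_nat_succ -IHl // -IHr // /= /kappa; lia.
Qed.

Lemma pair_dist_sum t : uniq (leaves t) ->
  pair_dist t = \sum_(i <- leaves t) \sum_(j <- leaves t) nodal_dist t i j.
Proof.
elim: t => [a|l IHl r IHr]; first by rewrite !big_seq1.
case/disjoint_leaves=> ul ur disj.
rewrite -[leaves (Node l r)]/(leaves l ++ leaves r) big_cat.
under eq_big_seq => i il.
  rewrite big_cat.
  under eq_big_seq => j jl do rewrite nodal_dist_Node_ll //.
  under [\sum_(j <- leaves r) _]eq_big_seq => j jr do rewrite nodal_dist_Node_lr //.
  over.
under [X in _ = _ + X]eq_big_seq => i ir.
  rewrite big_cat.
  under eq_big_seq => j jl do rewrite nodal_dist_sym nodal_dist_Node_lr //.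
  under [\sum_(j <- leaves r) _]eq_big_seq => j jr do rewrite nodal_dist_Node_rr //.
  over.
rewrite !big_split /= [\sum_(i <- leaves r) \sum_(j <- leaves l) _]exchange_big /=.
rewrite !sum_cross !sum_nat_succ.
by rewrite -!sackin_sum // -IHl // -IHr // /kappa; lia.
Qed.

Lemma sum_sym_pairs (f : nat -> nat -> nat) n : (forall i j, f i j = f j i) ->
  2 * \sum_(1 <= i < n.+1) \sum_(i.+1 <= j < n.+1) f i j + \sum_(1 <= i < n.+1) f i i
  = \sum_(1 <= i < n.+1) \sum_(1 <= j < n.+1) f i j.
Proof.
move=> f_sym; elim: n => [|n IH]; first by rewrite !big_geq.
rewrite (big_nat_recr n.+1) // [X in _ + X](big_nat_recr n.+1) //.
rewrite [X in _ = X](big_nat_recr n.+1) //= (big_geq (m := n.+2)) // addn0.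
rewrite [X in _ = _ + X](big_nat_recr n.+1) //=.
under eq_big_nat => i /andP [_ i_le] do rewrite big_nat_recr //.
under [X in _ = X + _]eq_big_nat => i /andP [i_gt0 _] do rewrite big_nat_recr //.
rewrite !big_split /= -IH.
under [\sum_(1 <= i < n.+1) f n.+1 i]eq_bigr do rewrite f_sym.
lia.
Qed.

Lemma total_area_pair_dist n t : perm_eq (leaves t) (iota 1 n) ->
  2 * total_area n t = pair_dist t.
Proof.
move=> lt; have ut : uniq (leaves t) by rewrite (perm_uniq lt) iota_uniq.
have diag0 : \sum_(1 <= i < n.+1) nodal_dist t i i = 0.
  rewrite big_nat_cond big1 // => i /andP [i_in _].
  by apply: nodal_dist_diag; rewrite (perm_mem lt) mem_iota; lia.
rewrite pair_dist_sum // (perm_big _ lt) /=.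
under eq_bigr do rewrite (perm_big _ lt).
have -> : iota 1 n = index_iota 1 n.+1 by rewrite /index_iota subn1.
by rewrite -sum_sym_pairs ?diag0 ?addn0 //; apply: nodal_dist_sym.
Qed.

Fixpoint splits (r : seq nat) : seq (seq nat * seq nat) :=
  if r is y :: r' then [seq (y :: p.1, p.2) | p <- splits r'] ++
                       [seq (p.1, y :: p.2) | p <- splits r']
  else [:: ([::], [::])].

Lemma splitsP r p : p \in splits r ->
  [/\ perm_eq (p.1 ++ p.2) r, subseq p.1 r & subseq p.2 r].
Proof.
elim: r p => [|y r IH] p /=; first by rewrite inE => /eqP ->.
have sub_cons s : subseq s r -> subseq s (y :: r).
  by move/subseq_trans; apply; apply: subseq_cons.
rewrite mem_cat => /orP [] /mapP [q /IH [q_perm q1 q2] ->].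
- by split; [rewrite cat_cons perm_cons | rewrite /= eqxx | exact: sub_cons].
- split; [|exact: sub_cons | by rewrite /= eqxx].
  by rewrite -cat1s perm_catCA /= perm_cons.
Qed.

Lemma splits_filter (a : pred nat) r :
  ([seq x <- r | a x], [seq x <- r | ~~ a x]) \in splits r.
Proof.
elim: r => [|y r IH] /=; first by rewrite inE.
rewrite mem_cat; case: (a y) => /=; apply/orP; [left | right];
  by apply/mapP; exists ([seq x <- r | a x], [seq x <- r | ~~ a x]).
Qed.

Lemma splits_uniq r : uniq r -> uniq (splits r).
Proof.
elim: r => [|y r IH] //= /andP [y_notin ur].
rewrite cat_uniq !map_inj_uniq ?IH //= ?andbT; try by move=> [? ?] [? ?] [-> ->].
apply/hasPn => _ /mapP [p p_in ->]; apply/negP => /mapP [q q_in [p1_eq _]].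
case: (splitsP p_in) => /perm_mem p_mem _ _.
by move: y_notin; rewrite -p_mem mem_cat p1_eq mem_head.
Qed.

(* [canon_trees f s]: the canonical trees whose leaves are the sorted list s
   (f is fuel, at least size s). *)
Fixpoint canon_trees (f : nat) (s : seq nat) : seq tree :=
  match f, s with
  | f'.+1, [:: x] => [:: Leaf x]
  | f'.+1, x :: rest =>
      flatten [seq [seq Node l r | l <- canon_trees f' (x :: p.1), r <- canon_trees f' p.2]
              | p <- splits rest & p.2 != [::]]
  | _, _ => [::]
  end.

Lemma canon_trees_cons f x y rr :
  canon_trees f.+1 [:: x, y & rr] =
  flatten [seq [seq Node l r | l <- canon_trees f (x :: p.1), r <- canon_trees f p.2]
          | p <- splits (y :: rr) & p.2 != [::]].
Proof. by []. Qed.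

Lemma mem_canon_trees f x y rr t : t \in canon_trees f.+1 [:: x, y & rr] ->
  exists l r p, [/\ t = Node l r, p \in splits (y :: rr), p.2 != [::],
                    l \in canon_trees f (x :: p.1) & r \in canon_trees f p.2].
Proof.
rewrite canon_trees_cons => /flatten_mapP [p]; rewrite mem_filter => /andP [p2 p_in].
by case/allpairsP => [[l r] [l_in r_in ->]]; exists l, r, p.
Qed.

Lemma canon_trees_Node f x y rr p l r : p \in splits (y :: rr) -> p.2 != [::] ->
  l \in canon_trees f (x :: p.1) -> r \in canon_trees f p.2 ->
  Node l r \in canon_trees f.+1 [:: x, y & rr].
Proof.
move=> p_in p2 l_in r_in; rewrite canon_trees_cons; apply/flatten_mapP.
by exists p; [rewrite mem_filter p2 | exact: allpairs_f].
Qed.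

Lemma canon_trees_leaves f s t : t \in canon_trees f s -> perm_eq (leaves t) s.
Proof.
elim: f s t => [|f IH] [|x [|y rr]] t //=; first by rewrite inE => /eqP ->.
case/mem_canon_trees => l [r [p [-> /splitsP [p_perm _ _] _ /IH l_perm /IH r_perm]]].
by apply: perm_trans (perm_cat l_perm r_perm) _; rewrite /= perm_cons.
Qed.

Lemma kappa_canon_trees f s t : t \in canon_trees f s -> kappa t = size s.
Proof. by move/canon_trees_leaves/perm_size. Qed.

Lemma minleaf_mem t : minleaf t \in leaves t.
Proof.
elim: t => [a|l IHl r IHr] /=; first by rewrite inE.
by rewrite mem_cat; case: leqP => _; rewrite ?IHl ?IHr ?orbT.
Qed.

Lemma minleaf_le t y : y \in leaves t -> minleaf t <= y.
Proof.
elim: t => [a|l IHl r IHr] /=; first by rewrite inE => /eqP ->.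
by rewrite mem_cat geq_min => /orP [/IHl -> | /IHr ->]; rewrite ?orbT.
Qed.

Lemma sorted_subseq_cons x rest p :
  sorted ltn (x :: rest) -> subseq p rest -> sorted ltn (x :: p).
Proof.
by move=> x_rest p_sub; apply: (subseq_sorted ltn_trans _ x_rest); rewrite /= eqxx.
Qed.

Lemma sorted_subseq_behead x rest p :
  sorted ltn (x :: rest) -> subseq p rest -> sorted ltn p.
Proof. by move/path_sorted => rest_sorted /(subseq_sorted ltn_trans); apply. Qed.

Lemma sorted_head_min x rest y : sorted ltn (x :: rest) -> y \in rest -> x < y.
Proof. by move/(order_path_min ltn_trans)/allP; apply. Qed.

Lemma canon_trees_canonical f s t : sorted ltn s -> t \in canon_trees f s -> canonical t.
Proof.
elim: f s t => [|f IH] [|x [|y rr]] t //; first by rewrite /= inE => _ /eqP ->.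
move=> s_sorted /mem_canon_trees [l [r [p [-> p_in _ l_in r_in]]]].
case: (splitsP p_in) => p_perm p1_sub p2_sub.
rewrite /= (IH _ _ (sorted_subseq_cons s_sorted p1_sub) l_in).
rewrite (IH _ _ (sorted_subseq_behead s_sorted p2_sub) r_in) /=.
have x_l : x \in leaves l by rewrite (perm_mem (canon_trees_leaves l_in)) mem_head.
apply: leq_ltn_trans (minleaf_le x_l) (sorted_head_min s_sorted _).
by rewrite -(perm_mem p_perm) mem_cat -(perm_mem (canon_trees_leaves r_in)) minleaf_mem orbT.
Qed.

Lemma canonical_Node_split x rest l r :
  sorted ltn (x :: rest) -> canonical (Node l r) ->
  perm_eq (leaves l ++ leaves r) (x :: rest) ->
  exists2 p, p \in splits rest & perm_eq (leaves l) (x :: p.1) /\ perm_eq (leaves r) p.2.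
Proof.
move=> s_sorted /= /and3P [_ _ min_lt] lr_perm.
have /and3P [_ disj _] : [&& uniq (leaves l), ~~ has (mem (leaves l)) (leaves r) & uniq (leaves r)].
  by rewrite -cat_uniq (perm_uniq lr_perm) (sorted_uniq ltn_trans ltnn).
have x_min y : y \in leaves l ++ leaves r -> x <= y.
  rewrite (perm_mem lr_perm) inE => /orP [/eqP -> // | /(sorted_head_min s_sorted)].
  exact: ltnW.
have x_l : x \in leaves l.
  have : x \in leaves l ++ leaves r by rewrite (perm_mem lr_perm) mem_head.
  rewrite mem_cat => /orP [// | x_r].
  have x_le_l : x <= minleaf l by apply: x_min; rewrite mem_cat minleaf_mem.
  by have := leq_trans (minleaf_le x_r) x_le_l; rewrite leqNgt min_lt.
have r_notin_l y : y \in leaves r -> y \notin leaves l.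
  by move=> y_r; apply/negP => y_l; case/negP: disj; apply/hasP; exists y.
exists ([seq y <- rest | y \in leaves l], [seq y <- rest | y \notin leaves l]).
  exact: (splits_filter (fun y => y \in leaves l)).
split.
- have := perm_filter (mem (leaves l)) lr_perm.
  rewrite filter_cat /= x_l (eq_in_filter (a2 := predT)) ?filter_predT //.
  by rewrite (eq_in_filter (a2 := pred0)) ?filter_pred0 ?cats0 // => y /r_notin_l /negbTE.
- have := perm_filter (predC (mem (leaves l))) lr_perm.
  rewrite filter_cat /= x_l (eq_in_filter (a2 := pred0)) ?filter_pred0 => [|y /= ->] //.
  by rewrite (eq_in_filter (a2 := predT)) ?filter_predT // => y /r_notin_l.
Qed.

Lemma canon_trees_complete f s t : sorted ltn s -> size s <= f -> canonical t ->
  perm_eq (leaves t) s -> t \in canon_trees f s.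
Proof.
elim: f s t => [|f IH] s t s_sorted size_le t_canon t_perm;
  have := kappa_gt0 t; rewrite /kappa (perm_size t_perm) => s_gt0.
  by move: size_le; rewrite leqNgt s_gt0.
case: s s_gt0 s_sorted size_le t_perm => [|x rest] // _ s_sorted size_le t_perm.
case: t t_canon t_perm => [a | l r] t_canon t_perm.
  have := perm_size t_perm; case: rest {s_sorted size_le} t_perm => // t_perm _.
  by have := perm_mem t_perm x; rewrite mem_head !inE => /eqP ->.
move: (t_canon) => /= /and3P [l_canon r_canon _].
have [p p_in [l_perm r_perm]] := canonical_Node_split s_sorted t_canon t_perm.
have sizes : size (leaves l) + size (leaves r) = (size rest).+1.
  by rewrite -size_cat (perm_size t_perm).
have l_gt0 := kappa_gt0 l; have r_gt0 := kappa_gt0 r; rewrite /kappa in l_gt0 r_gt0.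
have [l_le r_le] : size (leaves l) <= f /\ size (leaves r) <= f by move: size_le => /=; lia.
case: rest => [|y rr] in s_sorted t_perm p_in sizes {size_le} *.
  by move: sizes; rewrite -[size [::]]/0; lia.
have [_ p1_sub p2_sub] := splitsP p_in.
apply: (canon_trees_Node p_in).
- by rewrite -size_eq0 -(perm_size r_perm) -lt0n.
- apply: (IH _ _ (sorted_subseq_cons s_sorted p1_sub) _ l_canon l_perm).
  by rewrite -(perm_size l_perm).
- apply: (IH _ _ (sorted_subseq_behead s_sorted p2_sub) _ r_canon r_perm).
  by rewrite -(perm_size r_perm).
Qed.

Lemma uniq_flatten_map (S T : eqType) (F : S -> seq T) (P : seq S) : uniq P ->
  {in P, forall p, uniq (F p)} ->
  (forall p q t, p \in P -> q \in P -> t \in F p -> t \in F q -> p = q) ->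
  uniq (flatten (map F P)).
Proof.
elim: P => [|p P IH] //= /andP [p_notin P_uniq] F_uniq F_disj.
rewrite cat_uniq F_uniq ?mem_head // IH //; first last.
- by move=> a b t a_in b_in; apply: F_disj; rewrite inE ?a_in ?b_in orbT.
- by move=> a a_in; apply: F_uniq; rewrite inE a_in orbT.
rewrite andbT; apply/hasPn => t /flatten_mapP [q q_in t_q]; apply/negP => t_p.
have p_eq_q : p = q by apply: (F_disj p q t); rewrite ?inE ?q_in ?eqxx ?orbT.
by move: p_notin; rewrite p_eq_q q_in.
Qed.

(* [canon_trees] has no duplicates: a tree determines its split. *)
Lemma canon_trees_uniq f s : sorted ltn s -> uniq (canon_trees f s).
Proof.
elim: f s => [|f IH] [|x [|y rr]] // s_sorted; rewrite canon_trees_cons.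
have rest_uniq : uniq (y :: rr) by apply: (sorted_uniq ltn_trans ltnn (path_sorted s_sorted)).
apply: uniq_flatten_map.
- exact: filter_uniq (splits_uniq rest_uniq).
- move=> p; rewrite mem_filter => /andP [_ /splitsP [_ p1_sub p2_sub]].
  apply: allpairs_uniq; [exact: IH (sorted_subseq_cons s_sorted p1_sub)
                        | exact: IH (sorted_subseq_behead s_sorted p2_sub)
                        | by move=> [? ?] [? ?] _ _ [-> ->]].
move=> p q t; rewrite !mem_filter => /andP [_ /splitsP [_ p1_sub p2_sub]].
move=> /andP [_ /splitsP [_ q1_sub q2_sub]].
case/allpairsP => [[l r] [l_in r_in ->]] /allpairsP [[l' r'] [l'_in r'_in [l_eq r_eq]]] /=.
subst l' r'.
have labels_eq (u v : seq nat) :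
    subseq u (y :: rr) -> subseq v (y :: rr) -> perm_eq u v -> u = v.
  move=> u_sub v_sub /perm_mem; apply: (irr_sorted_eq ltn_trans ltnn).
  - exact: sorted_subseq_behead s_sorted u_sub.
  - exact: sorted_subseq_behead s_sorted v_sub.
have p1_eq : p.1 = q.1.
  apply: (labels_eq _ _ p1_sub q1_sub); rewrite -(perm_cons x).
  by apply: perm_trans (canon_trees_leaves l'_in); rewrite perm_sym (canon_trees_leaves l_in).
have p2_eq : p.2 = q.2.
  apply: (labels_eq _ _ p2_sub q2_sub).
  by apply: perm_trans (canon_trees_leaves r'_in); rewrite perm_sym (canon_trees_leaves r_in).
by rewrite [p]surjective_pairing [q]surjective_pairing p1_eq p2_eq.
Qed.

Lemma trees_k_complete t labs fuel : {subset leaves t <= labs} -> kappa t <= fuel ->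
  t \in trees_k labs fuel (kappa t).
Proof.
elim: t fuel => [a|l IHl r IHr] [|f] // t_labs t_size.
- by rewrite /= map_f // t_labs ?mem_head.
- by move: t_size; rewrite leqNgt kappa_gt0.
have l_gt0 := kappa_gt0 l; have r_gt0 := kappa_gt0 r.
move: t_size; rewrite kappa_Node /= => t_size.
rewrite ifN_eqC; last by rewrite eq_sym; lia.
apply/flatten_mapP; exists (kappa l); first by rewrite mem_iota; lia.
rewrite addKn; apply: allpairs_f; [apply: IHl | apply: IHr]; try lia;
  by move=> a a_in; apply: t_labs; rewrite /= mem_cat a_in ?orbT.
Qed.

Lemma BT_canon_trees n : perm_eq (BT n) (canon_trees n (iota 1 n)).
Proof.
have iota_sorted : sorted ltn (iota 1 n) by apply: iota_ltn_sorted.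
apply: uniq_perm; [exact: undup_uniq | exact: canon_trees_uniq |] => t.
rewrite mem_undup mem_filter /in_BT; apply/idP/idP.
  by case/andP => /andP [t_canon t_perm] _; apply: canon_trees_complete; rewrite ?size_iota.
move=> t_in; have t_perm := canon_trees_leaves t_in.
rewrite (canon_trees_canonical iota_sorted t_in) t_perm /=.
have t_size : kappa t = n by rewrite (kappa_canon_trees t_in) size_iota.
have := @trees_k_complete t (iota 1 n) n; rewrite t_size; apply=> // a.
by rewrite (perm_mem t_perm).
Qed.

Local Open Scope ring_scope.

Definition harmonic (k : nat) : rat := \sum_(1 <= i < k.+1) (i%:R)^-1.

(* Expected Sackin index of a Yule tree with k leaves. *)
Definition sackin_mean (k : nat) : rat := 2 * k%:R * (harmonic k - 1).

(* Expected [pair_dist] of a Yule tree with k leaves (twice E_Y(D_k)). *)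
Definition pair_dist_mean (k : nat) : rat :=
  4 * k%:R * (k%:R + 1) * (harmonic k - 1) - 4 * k%:R * (k%:R - 1).

Lemma harmonicS k : harmonic k.+1 = harmonic k + (k.+1%:R)^-1.
Proof. by rewrite /harmonic big_nat_recr. Qed.

Lemma harmonic1 : harmonic 1 = 1.
Proof. by rewrite /harmonic big_nat1 invr1. Qed.

Lemma natS_neq0 k : (k.+1%:R : rat) != 0.
Proof. by rewrite pnatr_eq0. Qed.

Lemma sum_telescope (f g : nat -> rat) : g 1 = 0 ->
  (forall k, (0 < k)%N -> g k.+1 = g k + f k) ->
  forall k, (0 < k)%N -> \sum_(1 <= a < k) f a = g k.
Proof.
move=> g1 gS; elim=> // k IH _; case: k IH => [|k] IH; first by rewrite big_geq.
by rewrite (big_nat_recr k.+1) //= IH // (gS k.+1).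
Qed.

Lemma sum_reflect (F : nat -> rat) k :
  \sum_(1 <= a < k) F (k - a)%N = \sum_(1 <= a < k) F a.
Proof.
rewrite [RHS](big_nat_rev _ _ 1 k); apply: eq_big_nat => a _.
by rewrite add1n subSS.
Qed.

Lemma sum_nat_id k : \sum_(1 <= a < k) (a%:R : rat) = k%:R * (k%:R - 1) / 2.
Proof.
case: k => [|k]; first by rewrite big_geq // mul0r mul0r.
move: k.+1 (ltn0Sn k); apply: sum_telescope => [|j _]; first by rewrite subrr mulr0 mul0r.
by rewrite -natr1; field.
Qed.

Lemma sum_nat_sq k : (0 < k)%N ->
  \sum_(1 <= a < k) (a%:R ^+ 2 : rat) = (k%:R - 1) * k%:R * (2 * k%:R - 1) / 6.
Proof.
move: k; apply: sum_telescope => [|j _]; first by rewrite subrr !mul0r.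
by rewrite -natr1; field.
Qed.

Lemma sum_nat_cube k : (0 < k)%N ->
  \sum_(1 <= a < k) (a%:R ^+ 3 : rat) = (k%:R * (k%:R - 1) / 2) ^+ 2.
Proof.
move: k; apply: sum_telescope => [|j _]; first by rewrite subrr mulr0 mul0r expr2 mulr0.
by rewrite -natr1; field.
Qed.

Lemma sum_sackin_mean k : (0 < k)%N ->
  \sum_(1 <= a < k) sackin_mean a =
  (k%:R ^+ 2 - k%:R) * harmonic k - 3 / 2 * (k%:R ^+ 2 - k%:R).
Proof.
move: k; apply: sum_telescope => [|j _]; first by rewrite expr1n subrr mulr0 mul0r subr0.
have := natS_neq0 j; rewrite /sackin_mean harmonicS -natr1 => j1_neq0.
by field.
Qed.

Lemma sum_id_sackin_mean k : (0 < k)%N ->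
  \sum_(1 <= a < k) a%:R * sackin_mean a =
  (k%:R / 3 - k%:R ^+ 2 + 2 / 3 * k%:R ^+ 3) * harmonic k
  - 5 / 18 * k%:R + 7 / 6 * k%:R ^+ 2 - 8 / 9 * k%:R ^+ 3.
Proof.
move: k; apply: sum_telescope => [|j _]; first by rewrite harmonic1 expr1n; field.
have := natS_neq0 j; rewrite /sackin_mean harmonicS -natr1 => j1_neq0.
by field.
Qed.

Lemma sum_pair_dist_mean k : (0 < k)%N ->
  \sum_(1 <= a < k) pair_dist_mean a =
  (4 / 3 * k%:R ^+ 3 - 4 / 3 * k%:R) * harmonic k
  - 2 / 9 * k%:R + 10 / 3 * k%:R ^+ 2 - 28 / 9 * k%:R ^+ 3.
Proof.
move: k; apply: sum_telescope => [|j _]; first by rewrite harmonic1 expr1n; field.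
have := natS_neq0 j; rewrite /pair_dist_mean harmonicS -natr1 => j1_neq0.
by field.
Qed.

(* Conditional means of [sackin] and [pair_dist] of a node whose subtrees
   have a and b leaves, in terms of the means of the subtrees. *)
Definition sackin_split (a b : nat) : rat := sackin_mean a + sackin_mean b + (a + b)%:R.

Definition pair_dist_split (a b : nat) : rat :=
  pair_dist_mean a + pair_dist_mean b +
  2 * (b%:R * sackin_mean a + a%:R * sackin_mean b + 2 * (a%:R * b%:R)).

(* Recurrence of [sackin_mean]: averaging [sackin_split] over the size a of
   the subtree of the smallest label, with weight a, gives the mean again. *)
Lemma sackin_mean_rec k : (0 < k)%N ->
  \sum_(1 <= a < k) a%:R * sackin_split a (k - a) = k%:R * (k%:R - 1) / 2 * sackin_mean k.
Proof.
move=> k_gt0.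
have reflect_terms : \sum_(1 <= a < k) a%:R * sackin_split a (k - a) =
    \sum_(1 <= a < k) (a%:R * sackin_mean a + a%:R * k%:R +
                       (k%:R - (k - a)%N%:R) * sackin_mean (k - a)).
  apply: eq_big_nat => a /andP [_ a_lt].
  by rewrite /sackin_split subnKC ?natrB ?(ltnW a_lt) //; ring.
rewrite reflect_terms big_split /= (sum_reflect (fun c => (k%:R - c%:R) * sackin_mean c)).
rewrite -big_split /= (eq_bigr (fun a => k%:R * (sackin_mean a + a%:R))); last by move=> a _; ring.
rewrite -mulr_sumr big_split /= sum_sackin_mean // sum_nat_id /sackin_mean.
by field.
Qed.

(* The same recurrence for [pair_dist_mean]; reflecting the terms in the
   second subtree reduces it to the closed forms above. *)
Lemma pair_dist_mean_rec k : (0 < k)%N ->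
  \sum_(1 <= a < k) a%:R * pair_dist_split a (k - a) =
  k%:R * (k%:R - 1) / 2 * pair_dist_mean k.
Proof.
move=> k_gt0; rewrite /pair_dist_split; set K : rat := k%:R.
have reflect_terms : \sum_(1 <= a < k) a%:R * (pair_dist_mean a + pair_dist_mean (k - a) +
     2 * ((k - a)%N%:R * sackin_mean a + a%:R * sackin_mean (k - a) + 2 * (a%:R * (k - a)%N%:R)))
  = \sum_(1 <= a < k) ((a%:R * pair_dist_mean a + 2 * a%:R * (K - a%:R) * sackin_mean a
                        + 4 * a%:R ^+ 2 * (K - a%:R)) +
      (K - (k - a)%N%:R) * (pair_dist_mean (k - a) + 2 * (K - (k - a)%N%:R) * sackin_mean (k - a))).
  by apply: eq_big_nat => a /andP [_ a_lt]; rewrite /K !natrB ?(ltnW a_lt) //; ring.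
rewrite reflect_terms big_split /=.
rewrite (sum_reflect (fun c => (K - c%:R) * (pair_dist_mean c + 2 * (K - c%:R) * sackin_mean c))).
rewrite -big_split /= (eq_bigr (fun a => K * pair_dist_mean a + 2 * K ^+ 2 * sackin_mean a +
  (- 2 * K * (a%:R * sackin_mean a) + 4 * K * a%:R ^+ 2 + (- 4) * a%:R ^+ 3))); last first.
  by move=> a _; ring.
rewrite !big_split /= -!mulr_sumr sum_pair_dist_mean // sum_sackin_mean //.
rewrite sum_id_sackin_mean // sum_nat_sq // sum_nat_cube // /pair_dist_mean /K.
by field.
Qed.

Definition yule_mass (k : nat) : rat := (k`!)%:R / (2 ^ k.-1)%:R.

Lemma yule_mass1 : yule_mass 1 = 1.
Proof. by rewrite /yule_mass divr1. Qed.

Lemma pow2_neq0 e : ((2 ^ e)%:R : rat) != 0.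
Proof. by rewrite pnatr_eq0 expn_eq0. Qed.

Lemma fact_neq0 e : ((e`!)%:R : rat) != 0.
Proof. by rewrite pnatr_eq0 -lt0n fact_gt0. Qed.

Lemma yule_prod_Node l r :
  yule_prod (Node l r) = ((kappa l + kappa r).-1%:R)^-1 * yule_prod l * yule_prod r.
Proof. by rewrite -kappa_Node. Qed.

Lemma sum_splits (W : nat -> nat -> rat) r :
  \sum_(p <- splits r) W (size p.1) (size p.2) =
  \sum_(0 <= j < (size r).+1) 'C(size r, j)%:R * W j (size r - j)%N.
Proof.
elim: r W => [|y r IH] W; first by rewrite big_seq1 big_nat1 mul1r.
rewrite /= big_cat !big_map /= (IH (fun j i => W j.+1 i)) (IH (fun j i => W j i.+1)) /=.
set m := size r.
rewrite [RHS]big_nat_recl // bin0 mul1r subn0.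
under [in RHS]eq_big_nat => j _ do rewrite binS natrD mulrDl subSS.
rewrite big_split /= [X in _ + X = _]big_nat_recl // bin0 mul1r subn0.
rewrite [\sum_(0 <= i < m.+1) 'C(m, i.+1)%:R * _]big_nat_recr //= bin_small // mul0r addr0.
rewrite addrCA [X in _ = _ + X]addrC; congr (_ + (_ + _)).
by apply: eq_big_nat => j /andP [_ j_lt]; rewrite subnSK.
Qed.

(* Binomial times masses of both sides: the weight of a left subtree of
   size j+1 is proportional to j+1. *)
Lemma binomial_yule_mass m j : (j < m)%N ->
  'C(m, j)%:R * yule_mass j.+1 * yule_mass (m - j) = m`!%:R * j.+1%:R / (2 ^ m.-1)%:R.
Proof.
move=> j_lt.
have pow2 : (2 ^ m.-1 = 2 ^ j * 2 ^ (m - j).-1)%N by rewrite -expnD; congr (2 ^ _)%N; lia.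
rewrite /yule_mass pow2 -(bin_fact (ltnW j_lt)) factS !natrM.
by field; rewrite !pow2_neq0.
Qed.

Lemma sum_canon_trees_cons f x y rr (G : tree -> rat) :
  \sum_(t <- canon_trees f.+1 [:: x, y & rr]) G t =
  \sum_(p <- splits (y :: rr))
     (if p.2 != [::] then \sum_(l <- canon_trees f (x :: p.1))
                           \sum_(r <- canon_trees f p.2) G (Node l r) else 0).
Proof.
rewrite canon_trees_cons big_flatten big_map big_filter big_mkcond /=.
by apply: eq_bigr => p _; case: ifP => // _; rewrite big_allpairs_dep.
Qed.

Lemma yule_sum_Node f x y rr (G : tree -> rat) (X : nat -> nat -> rat) :
  let m := size (y :: rr) in
  (forall p, p \in splits (y :: rr) -> p.2 != [::] ->
     \sum_(l <- canon_trees f (x :: p.1)) \sum_(r <- canon_trees f p.2) G (Node l r)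
       = (m%:R)^-1 * (yule_mass (size p.1).+1 * yule_mass (size p.2)) *
         X (size p.1).+1 (size p.2)) ->
  \sum_(t <- canon_trees f.+1 [:: x, y & rr]) G t =
  yule_mass m.+1 * (2 / (m.+1%:R * m%:R)) * \sum_(1 <= a < m.+1) a%:R * X a (m.+1 - a)%N.
Proof.
move=> m node_sum; rewrite sum_canon_trees_cons.
pose W j i := if i == 0%N then 0 else (m%:R)^-1 * (yule_mass j.+1 * yule_mass i) * X j.+1 i.
rewrite (eq_big_seq (fun p => W (size p.1) (size p.2))); last first.
  by move=> p p_in; rewrite /W size_eq0; case: eqP => // /eqP p2; rewrite node_sum.
rewrite sum_splits -/m big_nat_recr //= subnn mulr0 addr0.
rewrite big_add1 /= mulr_sumr; apply: eq_big_nat => i /andP [_ i_lt].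
rewrite /W subn_eq0 leqNgt i_lt /= subSS.
rewrite [LHS](_ : _ = (m%:R)^-1 * ('C(m, i)%:R * yule_mass i.+1 * yule_mass (m - i)) *
  X i.+1 (m - i)%N); last by ring.
have m_neq0 : (m%:R : rat) != 0 by rewrite pnatr_eq0.
have pow2m : (2 ^ m = 2 * 2 ^ m.-1)%N by rewrite -expnS.
rewrite binomial_yule_mass // /yule_mass succnK factS pow2m !natrM.
by field; rewrite nat1r m_neq0 pow2_neq0 natS_neq0.
Qed.

Definition yule_moments (A : seq tree) (k : nat) : Prop :=
  [/\ \sum_(t <- A) yule_prod t = yule_mass k,
      \sum_(t <- A) yule_prod t * (sackin t)%:R = yule_mass k * sackin_mean k &
      \sum_(t <- A) yule_prod t * (pair_dist t)%:R = yule_mass k * pair_dist_mean k].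

Lemma yule_moments_affine A k (al be ga : rat) : yule_moments A k ->
  \sum_(t <- A) yule_prod t * (al * (pair_dist t)%:R + be * (sackin t)%:R + ga) =
  yule_mass k * (al * pair_dist_mean k + be * sackin_mean k + ga).
Proof.
case=> [mass_eq sackin_eq pair_eq].
under eq_bigr do rewrite !mulrDr mulrCA [yule_prod _ * (be * _)]mulrCA [_ * ga]mulrC.
by rewrite !big_split /= -!mulr_sumr mass_eq sackin_eq pair_eq; ring.
Qed.

Lemma sum_Node_bilinear (A B : seq tree) (F : tree -> tree -> rat)
    (u1 u2 v1 v2 : tree -> rat) (c : rat) :
  {in A, forall l, {in B, forall r, F l r = c * (u1 l * v1 r + u2 l * v2 r)}} ->
  \sum_(l <- A) \sum_(r <- B) F l r =
  c * ((\sum_(l <- A) u1 l) * (\sum_(r <- B) v1 r) + (\sum_(l <- A) u2 l) * (\sum_(r <- B) v2 r)).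
Proof.
move=> F_eq; rewrite !big_distrlr -big_split mulr_sumr /=; apply: eq_big_seq => l l_in.
by rewrite -big_split mulr_sumr; apply: eq_big_seq => r r_in; rewrite F_eq.
Qed.

Lemma yule_moments_Node (A B : seq tree) a b :
  {in A, forall l, kappa l = a} -> {in B, forall r, kappa r = b} ->
  yule_moments A a -> yule_moments B b ->
  let c := ((a + b).-1%:R)^-1 * (yule_mass a * yule_mass b) in
  [/\ \sum_(l <- A) \sum_(r <- B) yule_prod (Node l r) = c * 1,
      \sum_(l <- A) \sum_(r <- B) yule_prod (Node l r) * (sackin (Node l r))%:R =
        c * sackin_split a b &
      \sum_(l <- A) \sum_(r <- B) yule_prod (Node l r) * (pair_dist (Node l r))%:R =
        c * pair_dist_split a b].
Proof.
move=> kA kB mA mB c; set d := ((a + b).-1%:R : rat)^-1.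
have node_eq l r : l \in A -> r \in B ->
    yule_prod (Node l r) = d * yule_prod l * yule_prod r.
  by move=> l_in r_in; rewrite yule_prod_Node (kA l) // (kB r).
have [zA _ _] := mA; have [zB _ _] := mB.
split.
- rewrite (@sum_Node_bilinear _ _ _ yule_prod (fun=> 0) yule_prod (fun=> 0) d).
    by rewrite zA zB !big1_eq /c /d; ring.
  by move=> l l_in r r_in; rewrite node_eq //; ring.
- rewrite (@sum_Node_bilinear _ _ _
    (fun l => yule_prod l * (0 * (pair_dist l)%:R + 1 * (sackin l)%:R + (a + b)%:R))
    yule_prod yule_prod (fun r => yule_prod r * (0 * (pair_dist r)%:R + 1 * (sackin r)%:R + 0)) d).
    rewrite (yule_moments_affine _ _ _ mA) (yule_moments_affine _ _ _ mB) zA zB.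
    by rewrite /c /d /sackin_split; ring.
  move=> l l_in r r_in; rewrite node_eq // [sackin _]/= !natrD (kA l) // (kB r) //.
  by ring.
- rewrite (@sum_Node_bilinear _ _ _
    (fun l => yule_prod l * (1 * (pair_dist l)%:R + 2 * b%:R * (sackin l)%:R + 4 * (a%:R * b%:R)))
    yule_prod yule_prod
    (fun r => yule_prod r * (1 * (pair_dist r)%:R + 2 * a%:R * (sackin r)%:R + 0)) d).
    rewrite (yule_moments_affine _ _ _ mA) (yule_moments_affine _ _ _ mB) zA zB.
    by rewrite /c /d /pair_dist_split; ring.
  move=> l l_in r r_in; rewrite node_eq // [pair_dist _]/= !natrD !natrM (kA l) // (kB r) //.
  by ring.
Qed.

Lemma yule_moments_canon_trees f s : (0 < size s)%N -> (size s <= f)%N ->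
  yule_moments (canon_trees f s) (size s).
Proof.
elim: f s => [|f IH] [|x [|y rr]] // _ size_le.
  rewrite /yule_moments /= !big_seq1 yule_mass1 /sackin_mean /pair_dist_mean harmonic1.
  by split=> /=; ring.
set m := size (y :: rr).
have node_moments p : p \in splits (y :: rr) -> p.2 != [::] ->
    let c := (m%:R)^-1 * (yule_mass (size p.1).+1 * yule_mass (size p.2)) in
    let A := canon_trees f (x :: p.1) in let B := canon_trees f p.2 in
    [/\ \sum_(l <- A) \sum_(r <- B) yule_prod (Node l r) = c * 1,
        \sum_(l <- A) \sum_(r <- B) yule_prod (Node l r) * (sackin (Node l r))%:R =
          c * sackin_split (size p.1).+1 (size p.2) &
        \sum_(l <- A) \sum_(r <- B) yule_prod (Node l r) * (pair_dist (Node l r))%:R =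
          c * pair_dist_split (size p.1).+1 (size p.2)].
  move=> p_in p2_neq0 c A B; have [/perm_size p_size _ _] := splitsP p_in.
  rewrite size_cat in p_size.
  have p2_gt0 : (0 < size p.2)%N by rewrite lt0n size_eq0.
  have := @yule_moments_Node A B (size p.1).+1 (size p.2).
  rewrite addSn /= p_size; apply.
  - by move=> l /kappa_canon_trees.
  - by move=> r /kappa_canon_trees.
  - by apply: (IH) => //; move: size_le p_size p2_gt0 => /=; lia.
  - by apply: (IH) => //; move: size_le p_size p2_gt0 => /=; lia.
have m_neq0 : (m%:R : rat) != 0 by rewrite pnatr_eq0.
split.
- rewrite (@yule_sum_Node _ _ _ _ yule_prod (fun _ _ => 1)); last first.
    by move=> p p_in p2; case: (node_moments p p_in p2).
  under eq_bigr do rewrite mulr1.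
  rewrite sum_nat_id; field; by rewrite nat1r m_neq0 natS_neq0.
- rewrite (@yule_sum_Node _ _ _ _ (fun t => yule_prod t * (sackin t)%:R) sackin_split); last first.
    by move=> p p_in p2; case: (node_moments p p_in p2).
  rewrite sackin_mean_rec //; field; by rewrite nat1r m_neq0 natS_neq0.
- rewrite (@yule_sum_Node _ _ _ _ (fun t => yule_prod t * (pair_dist t)%:R) pair_dist_split).
    rewrite pair_dist_mean_rec //; field; by rewrite nat1r m_neq0 natS_neq0.
  by move=> p p_in p2; case: (node_moments p p_in p2).
Qed.

Lemma harmonic_from2 n : (0 < n)%N ->
  \sum_(2 <= i < n.+1) (i%:R : rat)^-1 = harmonic n - 1.
Proof.
by move=> n_gt0; rewrite /harmonic [in RHS]big_ltn ?ltnS // invr1 addrAC subrr add0r.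
Qed.

Unset Implicit Arguments.

Theorem mainTheorem16 (n : nat) (hn : (2 <= n)%N) :
  E_Y_D n =
    (2 * n * (n + 1))%:R * (\sum_(2 <= i < n.+1) (i%:R : rat)^-1)
    - (2 * n * (n - 1))%:R.
Proof.
have [_ _ pair_sum] : yule_moments (canon_trees n (iota 1 n)) n.
  by rewrite -[X in yule_moments _ X](size_iota 1 n); apply: yule_moments_canon_trees;
     rewrite size_iota //; lia.
have half_area t : t \in canon_trees n (iota 1 n) ->
    (total_area n t)%:R = (pair_dist t)%:R / 2 :> rat.
  by move/canon_trees_leaves/total_area_pair_dist <-; rewrite natrM; field.
rewrite /E_Y_D (perm_big _ (BT_canon_trees n)) /=.
rewrite (eq_big_seq (fun t => (2 ^ n.-1)%:R / (n`!)%:R / 2 * (yule_prod t * (pair_dist t)%:R)));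
  last by move=> t t_in; rewrite /P_Y half_area //; field; rewrite fact_neq0.
rewrite -mulr_sumr pair_sum.
rewrite harmonic_from2; last lia.
rewrite /yule_mass /pair_dist_mean !natrM natrD natrB; last lia.
by field; rewrite pow2_neq0 fact_neq0.
Qed.
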